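(* Let $\{F_i\}_{i=0}^n$ be a $\Delta(n,c)$ basis, let $a_0,\dots,a_n\in\mathbb{C}$, $p(x)=\sum_{i=0}^n a_iF_i(x)$, and suppose $p^{(j)}(c)=0$ for $j=0,\dots,\mu-1$, where $\mu\ge1$. (i) For every finite $\mathcal{D}\subseteq\mathbb{Z}$ with weight $w$ and orthonormal polynomials $g_0,g_1,\dots$ such that $w\succ p$, and every $s\in\mathcal{D}$, $$w(s)^2\sum_{i\in\mathcal{D}}\frac{|a_i|^2}{w(i)}\ \ge\ |a_s|^2\left(\sum_{j=\mu}^N g_j(s)^2\right)^{-1},$$ where $N=\deg A_w$. (ii) Let $s\in\{0,\dots,n\}$, $r=\lfloor(\mu-1)/2\rfloor$, and let $\mathcal{D}\subseteq\mathbb{Z}$ with weight $w$ be such that $s\notin\mathcal{D}$, the orthonormal polynomials $g_0,\dots,g_r$ exist (in particular $|\mathcal{D}|\ge r+1$ and $\sum_{x\in\mathcal D}w(x)|x|^{k}<\infty$ for $k\le 2r$), and $w\succ p-a_sF_s$ (i.e. $a_i=0$ for every $i\notin\mathcal{D}\cup\{s\}$). Then $$\max_{k\in\mathcal{D}}\frac{|a_k|}{w(k)}\ \ge\ |a_s|\sum_{j=0}^{r} g_j(s)^2.$$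
   Context: $\mathcal{P}^m$ denotes the set of complex polynomials of degree at most $m$. A sequence $F_0,\dots,F_n$ of functions analytic in an open disc centered at $c\in\mathbb{C}$ is a $\Delta(n,c)$ basis if there are polynomials $R_0,\dots,R_n$ with $\deg R_j=j$ (so $R_0,\dots,R_k$ form a basis of $\mathcal{P}^k$ for each $k\le n$) such that $F_i^{(j)}(c)=R_j(i)$ for all $i,j\in\{0,1,\dots,n\}$. For $\mathcal{D}\subseteq\mathbb{Z}$ and a weight $w:\mathbb{Z}\to[0,\infty)$ with $w(x)>0$ iff $x\in\mathcal{D}$, $g_0,g_1,\dots$ (with $\deg g_i=i$, real coefficients; for finite $\mathcal{D}$ only $g_0,\dots,g_{|\mathcal{D}|-1}$) denote the orthonormal polynomials: $\sum_{x\in\mathcal{D}}w(x)g_i(x)g_j(x)=\delta_{ij}$. For an expansion $\sum_i a_iF_i$ we write $w\succ \sum_i a_iF_i$ if $\{i: a_i\neq 0\}\subseteq\mathcal{D}$; for finite $\mathcal{D}$, setting $a_i=0$ for $i\in\mathcal{D}\setminus\{0,\dots,n\}$, $A_w$ denotes the polynomial of least degree with $A_w(i)=a_i/w(i)$ for all $i\in\mathcal{D}$. *)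

From HB Require Import structures.
From mathcomp Require Import all_boot all_order all_algebra.
From mathcomp Require Import all_classical all_reals all_analysis.
From mathcomp Require Import complex.
Set Implicit Arguments. Unset Strict Implicit. Unset Printing Implicit Defensive.
Import Order.TTheory GRing.Theory Num.Theory.
Import numFieldNormedType.Exports.
Local Open Scope ring_scope.
Local Open Scope classical_set_scope.

(* C = R[i] as a normed module over itself (complex modulus), so that
   complex derivatives (derive1 / derivable over R[i]) make sense. *)
HB.instance Definition _ (R : realType) := PseudoPointedMetric.copy R[i] (R[i])^o.
HB.instance Definition _ (R : realType) := GRing.ComAlgebra.copy R[i] (R[i])^o.
HB.instance Definition _ (R : realType) := Vector.copy R[i] (R[i])^o.
HB.instance Definition _ (R : realType) := NormedModule.copy R[i] (R[i])^o.

Definition cmod (R : realType) (z : R[i]) : R := complex.Re `|z|.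

Definition analytic_in_disc (R : realType) (F : R[i] -> R[i]) (c : R[i])
    (rho : R) : Prop :=
  0 < rho /\
  (forall (k : nat) (z : R[i]), cmod (z - c) < rho ->
      derivable (derive1n k F) z 1) /\
  (forall z : R[i], cmod (z - c) < rho ->
      (fun N : nat => \sum_(k < N) (derive1n k F c / (k`!)%:R * (z - c) ^+ k))
        @ \oo --> F z).

Definition Delta_basis (R : realType) (n : nat) (c : R[i])
    (F : nat -> R[i] -> R[i]) : Prop :=
  (exists rho : R, forall i, (i <= n)%N -> analytic_in_disc (F i) c rho) /\
  exists Rp : nat -> {poly R[i]},
    (forall j, (j <= n)%N -> size (Rp j) = j.+1) /\
    (forall i j, (i <= n)%N -> (j <= n)%N ->
       derive1n j (F i) c = (Rp j).[i%:R]).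

Definition aext (R : realType) (n : nat) (a : nat -> R[i]) (x : int) : R[i] :=
  match x with
  | Posz k => if (k <= n)%N then a k else 0
  | Negz _ => 0
  end.

Definition is_weight (R : realType) (D : int -> Prop) (w : int -> R) : Prop :=
  (forall x, 0 <= w x) /\ (forall x, 0 < w x <-> D x).

(* Sum over a possibly infinite D \subseteq Z: absolutely convergent,
   with value l (limit of the partial sums over D \cap [-M, M]). *)
Definition zpartial (R : realType) (D : int -> Prop) (f : int -> R) (M : nat) : R :=
  \sum_(k < (M + M).+1 | `[< D (k%:Z - M%:Z) >]) f (k%:Z - M%:Z).

Definition sum_over_eq (R : realType) (D : int -> Prop) (f : int -> R) (l : R) : Prop :=
  (exists B : R, forall M, zpartial D (fun x => `|f x|) M <= B) /\
  (zpartial D f @ \oo --> l).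

Definition orthonormal_upto (R : realType) (D : int -> Prop) (w : int -> R)
    (g : nat -> {poly R}) (m : nat) : Prop :=
  (forall i, (i <= m)%N -> size (g i) = i.+1) /\
  (forall i j, (i <= m)%N -> (j <= m)%N ->
     sum_over_eq D (fun x => w x * (g i).[x%:~R] * (g j).[x%:~R])
                 (if i == j then 1 else 0)).

(* Finite D (a duplicate-free list of integers): g_0, ..., g_{|D|-1}
   orthonormal for w on D. *)
Definition orthonormal_fin (R : realType) (D : seq int) (w : int -> R)
    (g : nat -> {poly R}) : Prop :=
  (forall i, (i < size D)%N -> size (g i) = i.+1) /\
  (forall i j, (i < size D)%N -> (j < size D)%N ->
     \sum_(x <- D) w x * (g i).[x%:~R] * (g j).[x%:~R] = if i == j then 1 else 0).

Definition lincomb (R : realType) (n : nat) (a : nat -> R[i])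
    (F : nat -> R[i] -> R[i]) : R[i] -> R[i] :=
  fun z => \sum_(i < n.+1) a i * F i z.

From HB Require Import structures.
From mathcomp Require Import all_boot all_order all_algebra.
From mathcomp Require Import all_classical all_reals all_analysis.
From mathcomp Require Import complex.
From mathcomp Require Import zify ring.
Set Implicit Arguments. Unset Strict Implicit. Unset Printing Implicit Defensive.
Import Order.TTheory GRing.Theory Num.Theory.
Import numFieldNormedType.Exports.
Local Open Scope ring_scope.
Local Open Scope classical_set_scope.

(* The conditions p^(j)(c) = 0 for j < mu say, through F_i^(j)(c) = R_j(i), that the
   functional q |-> sum_i a_i q(i) kills every polynomial of degree < mu.
   (i) The coefficients of A_w in the orthonormal basis are values of this functional at
   the g_j, so those of g_0, ..., g_(mu-1) vanish.  Hence a_s = w(s) sum_x a_x K(x) for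
   the kernel K = sum_(mu <= j <= N) g_j(s) g_j, and Cauchy-Schwarz together with
   sum_x w(x) K(x)^2 = K(s) gives the bound.
   (ii) For K = sum_(j <= r) g_j(s) g_j the polynomial K^2 has degree 2r < mu, so
   a_s K(s)^2 = - sum_(i <> s) a_i K(i)^2, whose modulus is at most
   max_k |a_k|/w(k) * sum_x w(x) K(x)^2 = max_k |a_k|/w(k) * K(s). *)

Section ComplexAnalysis.
Variable R : realType.
Implicit Types z : R[i].

Lemma cmodE z : (cmod z)%:C%C = `|z|.
Proof. by rewrite /cmod normc_def. Qed.

Lemma cmod_ge0 z : 0 <= cmod z.
Proof. by rewrite -ler0c cmodE. Qed.

Lemma cmod0 : cmod (0 : R[i]) = 0.
Proof. by rewrite /cmod normr0. Qed.

Lemma cmodN z : cmod (- z) = cmod z.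
Proof. by apply: complexI; rewrite !cmodE normrN. Qed.

Lemma cmodM z1 z2 : cmod (z1 * z2) = cmod z1 * cmod z2.
Proof. by apply: complexI; rewrite rmorphM /= !cmodE normrM. Qed.

Lemma cmodR (r : R) : cmod r%:C%C = `|r|.
Proof.
apply: complexI; rewrite cmodE normc_def /=.
by rewrite expr0n /= addr0 sqrtr_sqr.
Qed.

Lemma ler_cmodD z1 z2 : cmod (z1 + z2) <= cmod z1 + cmod z2.
Proof. by rewrite -lecR rmorphD /= !cmodE ler_normD. Qed.

Lemma ler_cmod_sum (I : Type) (r : seq I) (P : pred I) (f : I -> R[i]) :
  cmod (\sum_(i <- r | P i) f i) <= \sum_(i <- r | P i) cmod (f i).
Proof.
elim/big_rec2: _ => [|i y x _ le_xy]; first by rewrite cmod0.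
by apply: le_trans (ler_cmodD _ _) _; rewrite lerD2l.
Qed.

Lemma near_disc (c z : R[i]) (rho : R) : cmod (z - c) < rho ->
  \forall y \near z, cmod (y - c) < rho.
Proof.
move=> hz; rewrite -nbhs_nearE nbhs_ballP.
exists ((rho - cmod (z - c))%:C%C); first by rewrite /= ltcR subr_gt0.
move=> y /=; rewrite -ball_normE /= -cmodE ltcR => hy.
rewrite -(subrK z y) -addrA; apply: le_lt_trans (ler_cmodD _ _) _.
by rewrite -opprB cmodN -ltrBrDr.
Qed.

Lemma derive1n_lincomb n (c : R[i]) F (a : nat -> R[i]) rho :
  (forall i, (i <= n)%N -> analytic_in_disc (F i) c rho) ->
  forall j z, cmod (z - c) < rho ->
  derive1n j (lincomb n a F) z = \sum_(i < n.+1) a i * derive1n j (F i) z.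
Proof.
move=> hF; elim=> [|j IH] z hz; first by [].
have Fder (i : 'I_n.+1) : derivable (derive1n j (F (nat_of_ord i))) z 1.
  by have [_ [hd _]] := hF i (ltn_ord i); exact: hd.
rewrite derive1nS derive1E.
under eq_bigr do rewrite derive1nS derive1E.
set G := \sum_(i < n.+1) (a i \*: derive1n j (F i)).
have eqG : \forall y \near z, derive1n j (lincomb n a F) y = G y.
  near=> y; rewrite IH; first by rewrite /G fct_sumE.
  by near: y; exact: near_disc.
rewrite (@near_eq_derive _ _ _ _ _ z 1 eqG) /G derive_sum => [|i]; last exact: derivableZ.
by apply: eq_bigr => i _; rewrite deriveZ.
Unshelve. all: by end_near.
Qed.

End ComplexAnalysis.

Definition annihilates_polys (K : nzRingType) (n : nat) (a : nat -> K) (m : nat) :=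
  forall q : {poly K}, (size q <= m)%N -> \sum_(i < n.+1) a i * q.[i%:R] = 0.

Lemma poly_comb_of_size_basis (K : fieldType) (P : nat -> {poly K}) m :
  (forall j, (j < m)%N -> size (P j) = j.+1) ->
  forall q : {poly K}, (size q <= m)%N ->
  exists b : nat -> K, q = \sum_(j < m) b j *: P j.
Proof.
elim: m => [|m IH] hP q hq.
  by exists (fun _ => 0); rewrite big_ord0; apply/size_poly_leq0P.
have hPm : size (P m) = m.+1 by apply: hP.
have lc : (P m)`_m != 0.
  have := lead_coef_eq0 (P m); rewrite lead_coefE hPm /= => ->.
  by rewrite -size_poly_eq0 hPm.
set k := q`_m / (P m)`_m.
have hq' : (size (q - k *: P m)%R <= m)%N.
  apply/leq_sizeP => j hj; rewrite coefB coefZ.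
  case: (ltngtP j m) hj => // [hjm _|-> _]; last by rewrite /k divfK // subrr.
  by rewrite (leq_sizeP _ _ hq j hjm) (leq_sizeP _ _ (eq_leq hPm) j hjm) mulr0 subr0.
have [b hb] := IH (fun j hj => hP j (ltnW hj)) _ hq'.
exists (fun j => if j == m then k else b j).
rewrite big_ord_recr /= eqxx -[q](subrK (k *: P m)) hb; congr (_ + _).
by apply: eq_bigr => i _; rewrite ifN // neq_ltn ltn_ord.
Qed.

Lemma annihilates_polys_of_basis (K : fieldType) n (a : nat -> K)
    (P : nat -> {poly K}) m :
  (forall j, (j < m)%N -> size (P j) = j.+1) ->
  (forall j, (j < m)%N -> \sum_(i < n.+1) a i * (P j).[i%:R] = 0) ->
  annihilates_polys n a m.
Proof.
move=> hP ha q /(poly_comb_of_size_basis hP)[b ->].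
under eq_bigr do rewrite horner_sum mulr_sumr.
rewrite exchange_big big1 // => j _.
under eq_bigr do rewrite hornerZ mulrCA.
by rewrite -mulr_sumr ha ?mulr0.
Qed.

Lemma annihilates_polys_eq0 (K : numFieldType) n (a : nat -> K) :
  annihilates_polys n a n.+1 -> forall i : 'I_n.+1, a i = 0.
Proof.
move=> ha i; have xinj : injective (fun k : nat => k%:R : K) := mulrIn (oner_neq0 K).
set L := tnth (n.+1.-lagrange (fun k : nat => k%:R : K)) i.
have Lj (j : 'I_n.+1) : L.[j%:R] = (i == j)%:R := lagrange_sample (ltn0Sn n) xinj i j.
have := ha L; rewrite size_lagrange_ // => /(_ (leqnn _)).
under eq_bigr => j _ do rewrite Lj.
rewrite (bigD1 i) //= eqxx mulr1 big1 ?addr0 // => j ji.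
by rewrite eq_sym (negPf ji) mulr0.
Qed.

Lemma size_mul_self_leq (K : nzRingType) (p : {poly K}) mu :
  (0 < mu)%N -> (size p <= (mu.-1)./2.+1)%N -> (size (p * p)%R <= mu)%N.
Proof.
move=> mu_gt0 sp; apply: leq_trans (size_mul_leq _ _) _.
have := odd_double_half mu.-1; have := prednK mu_gt0.
have : (odd mu.-1 <= 1)%N by case: odd.
lia.
Qed.

Section OrthonormalExpansion.
Variable R : realType.
Implicit Types (D : int -> Prop) (g : nat -> {poly R}).

Lemma zpartial_sum D (I : Type) (r : seq I) (h : I -> int -> R) M :
  zpartial D (fun x => \sum_(i <- r) h i x) M = \sum_(i <- r) zpartial D (h i) M.
Proof. by rewrite /zpartial exchange_big. Qed.

Lemma zpartial_mull D (k : R) (h : int -> R) M :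
  zpartial D (fun x => k * h x) M = k * zpartial D h M.
Proof. by rewrite /zpartial mulr_sumr. Qed.

Lemma cvg_sum_seq (I : eqType) (r : seq I) (f : I -> nat -> R) (l : I -> R) :
  (forall i, i \in r -> f i @ \oo --> l i) ->
  (fun N => \sum_(i <- r) f i N) @ \oo --> \sum_(i <- r) l i.
Proof.
move=> fl; rewrite big_seq; under eq_fun do rewrite big_seq.
by apply: cvg_big => //; exact: add_continuous.
Qed.

Lemma sum_nat_le_zpartial D (f : int -> R) n M :
  (forall x, 0 <= f x) -> (forall x, ~ D x -> f x = 0) -> (n <= M)%N ->
  \sum_(i < n.+1) f i%:Z <= zpartial D f M.
Proof.
move=> f0 fD nM; rewrite /zpartial [leRHS]big_mkcond /=.
rewrite [leRHS](_ : _ = \sum_(k < (M + M).+1) f (k%:Z - M%:Z)); last first.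
  by apply: eq_bigr => k _; case: asboolP => // nD; rewrite fD.
rewrite -(big_mkord xpredT (fun k => f (k%:Z - M%:Z))).
rewrite (@big_cat_nat _ _ _ M 0 (M + M).+1) ?leqW ?leq_addr //=.
rewrite (@big_cat_nat _ _ _ (M + n.+1) M (M + M).+1) ?leq_addr //=; last first.
  by rewrite addnS ltnS leq_add2l.
rewrite ler_wpDl ?sumr_ge0 // ler_wpDr ?sumr_ge0 //.
rewrite -{1}[M]add0n big_addn addKn big_mkord.
by apply: ler_sum => i _; rewrite PoszD addrK.
Qed.

Lemma sum_nat_le_lim_zpartial D (f : int -> R) (l : R) n :
  (forall x, 0 <= f x) -> (forall x, ~ D x -> f x = 0) ->
  zpartial D f @ \oo --> l -> \sum_(i < n.+1) f i%:Z <= l.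
Proof.
move=> f0 fD fl; rewrite -(cvg_lim (@Rhausdorff R) fl).
apply: limr_ge; first by apply/cvg_ex; exists l.
near=> M; apply: sum_nat_le_zpartial => //.
by near: M; exact: nbhs_infty_ge.
Unshelve. all: by end_near.
Qed.

Lemma orthonormal_upto_nonempty D w g m :
  orthonormal_upto D w g m -> exists x, D x.
Proof.
move=> [_ orth]; apply: contrapT => noD.
have [_ cv0] := orth 0%N 0%N (leq0n _) (leq0n _); rewrite eqxx in cv0.
have Z (f : int -> R) : zpartial D f = fun=> 0.
  apply: funext => M; rewrite /zpartial big_pred0 // => k.
  by rewrite asboolF // => Dk; apply: noD; eexists; exact: Dk.
rewrite Z in cv0; have := cvg_lim (@Rhausdorff R) cv0.
by rewrite lim_cst // => /(_ eventually_filter)/esym/eqP; rewrite oner_eq0.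
Qed.

Definition christoffel g (lo hi : nat) (y : R) : {poly R} :=
  \sum_(lo <= j < hi) (g j).[y] *: g j.

Lemma horner_christoffel g lo hi y x :
  (christoffel g lo hi y).[x] = \sum_(lo <= j < hi) (g j).[y] * (g j).[x].
Proof. by rewrite horner_sum; apply: eq_bigr => j _; rewrite hornerZ. Qed.

Lemma size_christoffel g lo hi y :
  (forall j, (j < hi)%N -> size (g j) = j.+1) ->
  (size (christoffel g lo hi y) <= hi)%N.
Proof.
move=> sg; apply/leq_sizeP => k hk; rewrite coef_sum big_nat big1 // => j /andP[_ jhi].
by rewrite coefZ (leq_sizeP _ _ (eq_leq (sg j jhi)) k) ?mulr0 // (leq_trans jhi).
Qed.

Lemma mulr_sqr_christoffel g lo hi y v x :
  v * (christoffel g lo hi y).[x] ^+ 2 =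
  \sum_(lo <= j < hi) \sum_(lo <= l < hi)
     (g j).[y] * (g l).[y] * (v * (g j).[x] * (g l).[x]).
Proof.
rewrite horner_christoffel expr2 mulr_suml mulr_sumr; apply: eq_bigr => j _.
by rewrite mulr_sumr mulr_sumr; apply: eq_bigr => l _; ring.
Qed.

Lemma sum_diag (I : eqType) (r : seq I) (t : I -> R) : uniq r ->
  \sum_(j <- r) \sum_(l <- r) t j * t l * (if j == l then 1 else 0) =
  \sum_(j <- r) t j ^+ 2.
Proof.
move=> ur; apply: eq_big_seq => j jr.
rewrite (bigD1_seq j) //= eqxx mulr1 big1 ?addr0 ?expr2 // => l lj.
by rewrite eq_sym (negPf lj) mulr0.
Qed.

Lemma orthonormal_fin_christoffel (D : seq int) w g lo hi y :
  orthonormal_fin D w g -> (hi <= size D)%N ->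
  \sum_(x <- D) w x * (christoffel g lo hi y).[x%:~R] ^+ 2 =
  \sum_(lo <= j < hi) (g j).[y] ^+ 2.
Proof.
move=> [_ orth] hiD; under eq_bigr do rewrite mulr_sqr_christoffel.
rewrite -[RHS]sum_diag ?iota_uniq // exchange_big; apply: eq_big_nat => j /andP[_ jhi].
rewrite exchange_big; apply: eq_big_nat => l /andP[_ lhi].
by rewrite -mulr_sumr orth // (leq_trans _ hiD).
Qed.

Lemma orthonormal_upto_christoffel D w g m lo hi y :
  orthonormal_upto D w g m -> (hi <= m.+1)%N ->
  zpartial D (fun x => w x * (christoffel g lo hi y).[x%:~R] ^+ 2) @ \oo -->
  \sum_(lo <= j < hi) (g j).[y] ^+ 2.
Proof.
move=> [_ orth] him.
set t := fun j => (g j).[y].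
have -> : zpartial D (fun x => w x * (christoffel g lo hi y).[x%:~R] ^+ 2) =
    fun M => \sum_(lo <= j < hi) \sum_(lo <= l < hi)
      t j * t l * zpartial D (fun x => w x * (g j).[x%:~R] * (g l).[x%:~R]) M.
  apply: funext => M; under [X in zpartial D X]funext do rewrite mulr_sqr_christoffel.
  rewrite zpartial_sum; apply: eq_bigr => j _.
  by rewrite zpartial_sum; apply: eq_bigr => l _; rewrite zpartial_mull.
rewrite -sum_diag ?iota_uniq //.
apply: cvg_sum_seq => j; rewrite mem_index_iota => /andP[_ jhi].
apply: cvg_sum_seq => l; rewrite mem_index_iota => /andP[_ lhi].
apply: cvgM; first exact: cvg_cst.
exact: (orth j l (leq_trans jhi him) (leq_trans lhi him)).2.
Qed.

End OrthonormalExpansion.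

Section SupRatio.
Variables (R : realType) (n : nat) (a : nat -> R[i]) (D : int -> Prop) (w : int -> R).
Hypothesis wD : is_weight D w.
Let S := [set cmod (aext n a k) / w k | k in D].

Let ratio_ge0 (z : R[i]) k : (0 : R) <= cmod z / w k.
Proof. by rewrite divr_ge0 ?cmod_ge0 ?wD.1. Qed.

Lemma ratio_le_sup y : S y -> y <= sup S.
Proof.
apply: ub_le_sup; exists (\sum_(j < n.+1) cmod (a j) / w j%:Z) => _ [[j|j] _ <-] /=.
  case: ifP => jN; last by rewrite cmod0 mul0r sumr_ge0.
  by rewrite (bigD1 (Ordinal (jN : (j < n.+1)%N))) //= ler_wpDr ?sumr_ge0.
by rewrite cmod0 mul0r sumr_ge0.
Qed.

Lemma sup_ratio_ge0 : (exists x, D x) -> 0 <= sup S.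
Proof.
move=> [x Dx]; apply: (le_trans (ratio_ge0 (aext n a x) x)).
by apply: ratio_le_sup; exists x.
Qed.

Lemma cmod_le_sup_ratio i : (exists x, D x) -> (i <= n)%N -> (a i != 0 -> D i%:Z) ->
  cmod (a i) <= sup S * w i%:Z.
Proof.
move=> D0 iN supp; have [->|ai0] := eqVneq (a i) 0.
  by rewrite cmod0 mulr_ge0 ?sup_ratio_ge0 ?wD.1.
have -> : a i = aext n a i%:Z by rewrite /= iN.
have Di := supp ai0; rewrite -ler_pdivrMr ?(wD.2 i%:Z).2 //.
by apply: (le_trans (lexx _)); apply: ratio_le_sup; exists i%:Z.
Qed.

End SupRatio.

Lemma eq_big_uniq_support (V : nmodType) (T : eqType) (s1 s2 : seq T) (phi : T -> V) :
  uniq s1 -> uniq s2 ->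
  (forall x, phi x != 0 -> (x \in s1) && (x \in s2)) ->
  \sum_(x <- s1) phi x = \sum_(x <- s2) phi x.
Proof.
move=> u1 u2 supp.
have restrict (t1 t2 : seq T) : (forall x, phi x != 0 -> x \in t2) ->
    \sum_(x <- t1) phi x = \sum_(x <- [seq y <- t1 | y \in t2]) phi x.
  move=> sub; rewrite big_filter [RHS]big_mkcond; apply: eq_bigr => x _.
  by case: ifP => // /negbT; apply: contraNeq => /sub.
rewrite (restrict s1 s2) => [|x /supp /andP[]//].
rewrite [RHS](restrict s2 s1) => [|x /supp /andP[]//].
apply: perm_big; apply: uniq_perm; rewrite ?filter_uniq // => x.
by rewrite !mem_filter andbC.
Qed.

Lemma exists_interp_poly (K : numFieldType) (D : seq int) (v : int -> K) :
  uniq D -> exists B : {poly K},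
  (forall x, x \in D -> B.[x%:~R] = v x) /\ (size B <= size D)%N.
Proof.
move=> uD; pose L x := \prod_(y <- rem x D) ('X - (y%:~R : K)%:P).
have LE x x' : (L x).[x'%:~R] = \prod_(y <- rem x D) (x'%:~R - y%:~R : K).
  by rewrite horner_prod; apply: eq_bigr => y _; rewrite hornerXsubC.
exists (\sum_(x <- D) (v x / (L x).[x%:~R]) *: L x); split.
  move=> x' x'D; rewrite horner_sum (bigD1_seq x') //= hornerZ big1_seq ?addr0.
    rewrite -mulrA mulVf ?mulr1 // LE prodf_seq_neq0; apply/allP => y.
    by rewrite mem_rem_uniq // inE => /andP[yx _] /=; rewrite subr_eq0 eqr_int eq_sym.
  move=> x /andP[xx' xD]; rewrite hornerZ (LE x x') [X in _ * X](big_rem x') /=.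
    by rewrite subrr mul0r mulr0.
  by rewrite mem_rem_uniq // inE eq_sym xx'.
apply: leq_trans (size_sum _ _ _) _; apply/bigmax_leqP_seq => x xD _.
apply: leq_trans (size_scale_leq _ _) _.
by rewrite size_prod_XsubC size_rem // prednK // lt0n size_eq0; apply: contraTneq xD => ->.
Qed.

Lemma size_min_interp_leq (K : numFieldType) (D : seq int) (v : int -> K)
    (A : {poly K}) :
  uniq D -> D != [::] ->
  (forall B : {poly K}, (forall x, x \in D -> B.[x%:~R] = v x) -> (size A <= size B)%N) ->
  ((size A).-1.+1 <= size D)%N.
Proof.
move=> uD D0 Amin; have [B [hB sB]] := exists_interp_poly v uD.
have := leq_trans (Amin B hB) sB; case: (size A) => //= _.
by rewrite lt0n size_eq0.
Qed.

Lemma weighted_CauchySchwarz (R : realFieldType) (I : eqType) (r : seq I)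
    (p q w : I -> R) :
  (forall i, i \in r -> 0 < w i) ->
  (\sum_(i <- r) p i * q i) ^+ 2 <=
  (\sum_(i <- r) p i ^+ 2 / w i) * (\sum_(i <- r) w i * q i ^+ 2).
Proof.
move=> w_gt0.
set A := \sum_(i <- r) _ ^+ 2 / _; set B := \sum_(i <- r) _ * _.
set C := \sum_(i <- r) w i * _.
have C_ge0 : 0 <= C.
  by rewrite /C big_seq sumr_ge0 // => i /w_gt0/ltW wi; rewrite mulr_ge0 ?sqr_ge0.
have [C0|C_neq0] := eqVneq C 0.
  have q0 i : i \in r -> q i = 0.
    move=> ir; move/eqP: C0; rewrite /C big_seq psumr_eq0 => [/allP/(_ i ir)|j /w_gt0/ltW wj].
      by rewrite ir mulf_eq0 sqrf_eq0 gt_eqF ?w_gt0 //= => /eqP.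
    by rewrite mulr_ge0 ?sqr_ge0.
  have -> : B = 0 by rewrite /B big_seq big1 // => i /q0 ->; rewrite mulr0.
  by rewrite C0 expr0n /= mulr0.
(* [t := B / C] minimises the nonnegative quadratic [sum (p i - t w i q i)^2 / w i]. *)
set t := B / C.
have : 0 <= \sum_(i <- r) (p i - t * w i * q i) ^+ 2 / w i.
  by rewrite big_seq sumr_ge0 // => i /w_gt0 wi; rewrite divr_ge0 ?sqr_ge0 ?ltW.
have -> : \sum_(i <- r) (p i - t * w i * q i) ^+ 2 / w i = A - 2 * t * B + t ^+ 2 * C.
  rewrite /A /B /C !mulr_sumr -sumrB -big_split /= big_seq [RHS]big_seq.
  by apply: eq_bigr => i /w_gt0 wi; field; rewrite gt_eqF.
move=> /mulr_ge0 /(_ C_ge0).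
have -> : (A - 2 * t * B + t ^+ 2 * C) * C = A * C - B ^+ 2 by rewrite /t; field.
by rewrite subr_ge0.
Qed.

Lemma horner_real_complex_int (R : realType) (p : {poly R}) (y : int) :
  (map_poly (real_complex R) p).[y%:~R] = (p.[y%:~R])%:C%C.
Proof. by rewrite -horner_map rmorph_int. Qed.

Lemma orthonormal_fin_expand (R : realType) (D : seq int) w (g : nat -> {poly R})
    (A : {poly R[i]}) m (y : int) :
  orthonormal_fin D w g -> (size A <= m)%N -> (m <= size D)%N ->
  A.[y%:~R] = \sum_(j < m)
    (\sum_(x <- D) (w x)%:C%C * A.[x%:~R] * ((g j).[x%:~R])%:C%C) * ((g j).[y%:~R])%:C%C.
Proof.
move=> [gsz gorth] Am mD; have jD (j : 'I_m) : (j < size D)%N := leq_trans (ltn_ord j) mD.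
have sizeC j : (j < m)%N -> size (map_poly (real_complex R) (g j)) = j.+1.
  by move=> jm; rewrite size_map_poly gsz // (leq_trans jm).
have [b ->] := poly_comb_of_size_basis sizeC Am.
have ev (x : int) : (\sum_(j < m) b j *: map_poly (real_complex R) (g j)).[x%:~R] =
    \sum_(j < m) b j * ((g j).[x%:~R])%:C%C.
  by rewrite horner_sum; apply: eq_bigr => j _; rewrite hornerZ horner_real_complex_int.
rewrite ev; apply: eq_bigr => l _; congr (_ * _).
under eq_bigr do rewrite ev mulr_sumr mulr_suml.
rewrite exchange_big (bigD1 l) //= [X in _ + X]big1 ?addr0 => [|j jl].
  rewrite (eq_bigr (fun x => b l * (w x * (g l).[x%:~R] * (g l).[x%:~R])%:C%C)).
    by rewrite -mulr_sumr -rmorph_sum gorth ?jD // eqxx mulr1.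
  by move=> x _; rewrite !rmorphM /=; ring.
rewrite (eq_bigr (fun x => b j * (w x * (g j).[x%:~R] * (g l).[x%:~R])%:C%C)).
  by rewrite -mulr_sumr -rmorph_sum gorth ?jD // ifN ?mulr0 //; apply: contra jl => /eqP/val_inj ->.
by move=> x _; rewrite !rmorphM /=; ring.
Qed.

Lemma sum_aext (R : realType) n (a : nat -> R[i]) (D : seq int) (h : int -> R[i]) :
  uniq D -> (forall i : nat, (i <= n)%N -> a i != 0 -> i%:Z \in D) ->
  \sum_(x <- D) aext n a x * h x = \sum_(i < n.+1) a i * h i%:Z.
Proof.
move=> uD supp; rewrite (@eq_big_uniq_support _ _ D (map Posz (iota 0 n.+1))) //.
- rewrite big_map -(big_mkord xpredT (fun i => a i * h i%:Z)) /index_iota subn0.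
  by apply: eq_big_seq => i; rewrite mem_iota /= ltnS => ->.
- by rewrite map_inj_uniq ?iota_uniq // => x y [].
move=> [i|k]; rewrite /aext mulf_eq0 negb_or => /andP[]; last by rewrite eqxx.
case: ifP => iN ai _; last by rewrite eqxx in ai.
by rewrite supp // andTb; apply/mapP; exists i; rewrite // mem_iota ltnS iN.
Qed.

Section Moments.
Variables (R : realType) (n : nat) (c : R[i]) (F : nat -> R[i] -> R[i]).
Variables (a : nat -> R[i]) (mu : nat).
Hypothesis basisF : Delta_basis n c F.
Hypothesis vanish : forall j, (j < mu)%N -> derive1n j (lincomb n a F) c = 0.

Lemma lincomb_annihilates : annihilates_polys n a mu.
Proof.
have [[rho hrho] [Rp [sizeRp derRp]]] := basisF.
have c_in : cmod (c - c) < rho by rewrite subrr cmod0; have [] := hrho 0%N isT.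
have low : annihilates_polys n a (minn mu n.+1).
  apply: (annihilates_polys_of_basis (P := Rp)) => j; rewrite leq_min => /andP[jmu jn].
    exact: sizeRp.
  rewrite -[RHS](vanish jmu) (derive1n_lincomb _ hrho _ c_in).
  by apply: eq_bigr => i _; rewrite derRp // -ltnS.
(* When mu > n the vanishing conditions force every a_i to be 0. *)
case: (leqP mu n) => [mun | nmu] q hq.
  by apply: low; rewrite (minn_idPl (leqW mun)).
have a0 : forall i : 'I_n.+1, a i = 0.
  by apply: annihilates_polys_eq0; move: low; rewrite (minn_idPr nmu).
by rewrite big1 // => i _; rewrite a0 mul0r.
Qed.

Lemma cmod_coef_le_sq (P : {poly R}) (s : 'I_n.+1) :
  (size (P * P)%R <= mu)%N ->
  cmod (a s) * P.[s%:R] ^+ 2 <=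
    \sum_(i < n.+1 | i != s) cmod (a i) * P.[i%:R] ^+ 2.
Proof.
move=> hP.
have PC (i : nat) : (map_poly (real_complex R) (P * P)).[i%:R] = (P.[i%:R] ^+ 2)%:C%C.
  by rewrite -(rmorph_nat (real_complex R) i) horner_map /= hornerM expr2.
have := @lincomb_annihilates (map_poly (real_complex R) (P * P)).
rewrite size_map_poly => /(_ hP); under eq_bigr do rewrite PC.
rewrite (bigD1 s) //= => /eqP; rewrite addr_eq0 => /eqP /(congr1 (@cmod R)).
rewrite cmodN cmodM cmodR ger0_norm ?sqr_ge0 // => ->.
apply: le_trans (ler_cmod_sum _ _ _) _.
by apply: ler_sum => i _; rewrite cmodM cmodR ger0_norm ?sqr_ge0.
Qed.

Lemma sum_aext_poly_eq0 (D : seq int) (q : {poly R}) :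
  uniq D -> (forall i : nat, (i <= n)%N -> a i != 0 -> i%:Z \in D) ->
  (size q <= mu)%N ->
  \sum_(x <- D) aext n a x * (q.[x%:~R])%:C%C = 0.
Proof.
move=> uD supp sq; rewrite sum_aext //.
rewrite -[RHS](@lincomb_annihilates (map_poly (real_complex R) q)) ?size_map_poly //.
by apply: eq_bigr => i _; rewrite (horner_real_complex_int _ i).
Qed.

Lemma aext_christoffel (D : seq int) w g (s : int) (A : {poly R[i]}) m :
  uniq D -> orthonormal_fin D w g ->
  (forall i : nat, (i <= n)%N -> a i != 0 -> i%:Z \in D) -> s \in D ->
  (forall x, x \in D -> aext n a x = (w x)%:C%C * A.[x%:~R]) ->
  (size A <= m)%N -> (m <= size D)%N ->
  aext n a s =
    (w s)%:C%C * \sum_(x <- D) aext n a x * ((christoffel g mu m s%:~R).[x%:~R])%:C%C.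
Proof.
move=> uD gorth supp sD alA Am mD.
pose cj j := \sum_(x <- D) aext n a x * ((g j).[x%:~R])%:C%C.
rewrite alA // (orthonormal_fin_expand _ gorth Am mD); congr (_ * _).
have cjE (j : 'I_m) : \sum_(x <- D) (w x)%:C%C * A.[x%:~R] * ((g j).[x%:~R])%:C%C = cj j.
  by apply: eq_big_seq => x xD; rewrite alA.
under eq_bigr do rewrite cjE.
rewrite (bigID (fun j : 'I_m => mu <= j)%N) /= [X in _ + X]big1 ?addr0 => [|j]; last first.
  rewrite -ltnNge => jmu; rewrite /cj sum_aext_poly_eq0 ?mul0r //.
  by rewrite gorth.1 // (leq_trans (ltn_ord j) mD).
rewrite /cj; under eq_bigr do rewrite mulr_suml.
rewrite exchange_big; apply: eq_bigr => x _.
rewrite horner_christoffel big_geq_mkord /= rmorph_sum mulr_sumr.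
by apply: eq_bigr => j _; rewrite rmorphM /=; ring.
Qed.

Lemma weighted_sum_sq_ge (D : seq int) w g (s : int) :
  uniq D -> is_weight (fun x => x \in D) w -> orthonormal_fin D w g ->
  (forall i : nat, (i <= n)%N -> a i != 0 -> i%:Z \in D) -> s \in D ->
  forall A : {poly R[i]},
  (forall x, x \in D -> A.[x%:~R] = aext n a x / (w x)%:C%C) ->
  (forall B : {poly R[i]},
     (forall x, x \in D -> B.[x%:~R] = aext n a x / (w x)%:C%C) ->
     (size A <= size B)%N) ->
  cmod (aext n a s) ^+ 2 <=
    w s ^+ 2 * (\sum_(x <- D) cmod (aext n a x) ^+ 2 / w x)
    * \sum_(mu <= j < (size A).-1.+1) (g j).[s%:~R] ^+ 2.
Proof.
move=> uD [w0 wpos] gorth supp sD A hA Amin.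
set al := aext n a; set m := (size A).-1.+1.
have w_gt0 x : x \in D -> 0 < w x by move=> xD; apply/(wpos x).2.
have alA x : x \in D -> al x = (w x)%:C%C * A.[x%:~R].
  by move=> xD; rewrite hA // mulrC divfK // fmorph_eq0 gt_eqF ?w_gt0.
have mD : (m <= size D)%N.
  by apply: size_min_interp_leq Amin => //; apply: contraTneq sD => ->.
set K := christoffel g mu m s%:~R.
have al_le : cmod (al s) <= w s * \sum_(x <- D) cmod (al x) * `|K.[x%:~R]|.
  rewrite [al s](aext_christoffel uD gorth supp sD alA (leqSpred _) mD).
  rewrite cmodM cmodR ger0_norm //; apply: (ler_wpM2l (w0 s)).
  apply: le_trans (ler_cmod_sum _ _ _) _.
  by apply: ler_sum => x _; rewrite cmodM cmodR.
have normK : \sum_(x <- D) w x * `|K.[x%:~R]| ^+ 2 = \sum_(mu <= j < m) (g j).[s%:~R] ^+ 2.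
  rewrite -(orthonormal_fin_christoffel _ _ gorth mD); apply: eq_bigr => x _.
  by rewrite real_normK ?num_real.
have CS := weighted_CauchySchwarz (fun x => cmod (al x)) (fun x => `|K.[x%:~R]|) w_gt0.
rewrite normK in CS.
apply: (@le_trans _ _ ((w s * \sum_(x <- D) cmod (al x) * `|K.[x%:~R]|) ^+ 2)).
  by rewrite ler_sqr ?nnegrE ?cmod_ge0 ?(le_trans (cmod_ge0 _) al_le).
by rewrite exprMn -mulrA; apply: (ler_wpM2l (sqr_ge0 _)).
Qed.

Lemma sup_ratio_ge (s : nat) D w g :
  (1 <= mu)%N -> (s <= n)%N -> is_weight D w ->
  orthonormal_upto D w g (mu.-1)./2 ->
  (forall i : nat, (i <= n)%N -> i != s -> a i != 0 -> D i%:Z) ->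
  sup [set cmod (aext n a k) / w k | k in D] >=
    cmod (a s) * \sum_(0 <= j < ((mu.-1)./2).+1) (g j).[s%:R] ^+ 2.
Proof.
move=> mu_gt0 sn wD gorth supp; set r := (mu.-1)./2.
set K := christoffel g 0 r.+1 s%:R; set T := \sum_(0 <= j < r.+1) _.
set M := sup _; have [w0 wpos] := wD; have D0 := orthonormal_upto_nonempty gorth.
have KsT : K.[s%:R] = T by rewrite horner_christoffel; apply: eq_bigr => j _; rewrite expr2.
have sizeKK : (size (K * K)%R <= mu)%N.
  by apply: size_mul_self_leq => //; apply: size_christoffel; case: gorth.
set s' := Ordinal (sn : (s < n.+1)%N).
have others (i : 'I_n.+1) : i != s' ->
    cmod (a i) * K.[i%:R] ^+ 2 <= M * (w i%:Z * K.[i%:R] ^+ 2).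
  move=> i_ne_s; rewrite [leRHS]mulrA; apply: ler_wpM2r; first exact: sqr_ge0.
  apply: cmod_le_sup_ratio => //; first by rewrite -ltnS.
  by apply: supp; [rewrite -ltnS | apply: contraNneq i_ne_s => i_s; apply/eqP/val_inj].
have normK : \sum_(i < n.+1) w i%:Z * K.[i%:R] ^+ 2 <= T.
  apply: (sum_nat_le_lim_zpartial (f := fun x => w x * K.[x%:~R] ^+ 2)) => [x|x nDx|] /=.
  - by rewrite mulr_ge0 ?sqr_ge0.
  - by have := w0 x; rewrite le_eqVlt => /orP[/eqP <-|/wpos/nDx //]; rewrite mul0r.
  - exact: orthonormal_upto_christoffel gorth _.
have M_ge0 : 0 <= M by exact: sup_ratio_ge0.
have ineq : cmod (a s) * T ^+ 2 <= M * T.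
  rewrite -{1}KsT; apply: le_trans (cmod_coef_le_sq s' sizeKK) _.
  apply: le_trans (ler_sum _ others) _; rewrite -mulr_sumr.
  apply: (ler_wpM2l M_ge0); apply: le_trans normK.
  by rewrite [leRHS](bigD1 s') //= ler_wpDl // mulr_ge0 ?sqr_ge0.
have [->|T_neq0] := eqVneq T 0; first by rewrite mulr0.
have T_gt0 : 0 < T by rewrite lt_def T_neq0 sumr_ge0 // => j _; rewrite sqr_ge0.
by rewrite -(ler_pM2r T_gt0) -mulrA -expr2.
Qed.

End Moments.

Theorem theorem2 (R : realType) (n : nat) (c : R[i])
    (F : nat -> R[i] -> R[i]) (a : nat -> R[i]) (mu : nat) :
  Delta_basis n c F ->
  (1 <= mu)%N ->
  (forall j : nat, (j < mu)%N -> derive1n j (lincomb n a F) c = 0) ->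
  (* (i) *)
  (forall (D : seq int) (w : int -> R) (g : nat -> {poly R}) (s : int),
     uniq D ->
     is_weight (fun x => x \in D) w ->
     orthonormal_fin D w g ->
     (forall i : nat, (i <= n)%N -> a i != 0 -> (i%:Z \in D)) ->
     s \in D ->
     forall A : {poly R[i]},
       (forall x, x \in D -> A.[x%:~R] = aext n a x / (w x)%:C%C) ->
       (forall B : {poly R[i]},
          (forall x, x \in D -> B.[x%:~R] = aext n a x / (w x)%:C%C) ->
          (size A <= size B)%N) ->
       cmod (aext n a s) ^+ 2 <=
         w s ^+ 2 * (\sum_(x <- D) cmod (aext n a x) ^+ 2 / w x)
         * \sum_(mu <= j < (size A).-1.+1) (g j).[s%:~R] ^+ 2)
  /\
  (* (ii) *)
  (forall (s : nat) (D : int -> Prop) (w : int -> R) (g : nat -> {poly R}),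
     (s <= n)%N ->
     ~ D s%:Z ->
     is_weight D w ->
     orthonormal_upto D w g (mu.-1)./2 ->
     (forall i : nat, (i <= n)%N -> i != s -> a i != 0 -> D i%:Z) ->
     sup [set cmod (aext n a k) / w k | k in D] >=
       cmod (a s) * \sum_(0 <= j < ((mu.-1)./2).+1) (g j).[s%:R] ^+ 2).
Proof.
(* The bound (ii) holds without the hypothesis that s lies outside D. *)
move=> basisF mu_gt0 vanish; split=> [D w g s | s D w g sn _].
  exact: (weighted_sum_sq_ge basisF vanish (D := D) (w := w) (g := g) (s := s)).
exact: (sup_ratio_ge basisF vanish (s := s) (D := D) (w := w) (g := g) mu_gt0 sn).
Qed.
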